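(* Let $G$ be a red-blue colouring of $K_n$, let $u \in V(G)$, and let $A_1, \ldots, A_5$ be pairwise disjoint non-empty subsets of $V(G) \setminus \{u\}$ such that $(A_1, \ldots, A_5)$ is a pentagon blow-up in $G$. Suppose that there are $t$ pairwise disjoint bad configurations in $(A_1,\dots,A_5)$ with respect to $u$, but no $t+1$ pairwise disjoint such bad configurations, where $t < \min_{i \in [5]} |A_i|$. Then there exists $i \in [5]$ such that $(A_i \cup \{u\}, A_{i+1}, \ldots, A_{i+4})$ is exactly $t$ edge-flips away from a pentagon blow-up.
   Context: A red-blue colouring of $K_n$ assigns red or blue to each edge of the complete graph on the $n$-vertex set $V(G)$. For pairwise disjoint non-empty sets $B_1,\dots,B_5 \subseteq V(G)$, $(B_1,\dots,B_5)$ is a pentagon blow-up if for every $i \in [5]$ all edges between $B_i$ and $B_{i+1}$ are red and all edges between $B_i$ and $B_{i+2}$ are blue (indices modulo 5); it is exactly $t$ edge-flips away from a pentagon blow-up if exactly $t$ of the edges between distinct sets $B_i, B_j$ have a colour different from the one required by this condition (so changing the colours of these $t$ edges makes it a pentagon blow-up). For $u \notin A_1\cup\dots\cup A_5$, a bad configuration in $(A_1,\dots,A_5)$ with respect to $u$ is either a set of three red neighbours of $u$, one from each of $A_i, A_{i+2}, A_{i+3}$ for some $i \in [5]$, or a set of three blue neighbours of $u$, one from each of $A_i, A_{i+1}, A_{i+2}$ for some $i \in [5]$. *)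

From mathcomp Require Import all_boot.
Set Implicit Arguments. Unset Strict Implicit. Unset Printing Implicit Defensive.

Definition ish (i : 'I_5) (k : nat) : 'I_5 :=
  Ordinal (ltn_pmod (i + k) (isT : 0 < 5)).

Section Pentagon.
Variable T : finType.
(* A red-blue colouring of the complete graph on T: [red x y] = true means
   the edge xy (x <> y) is red, false means blue.  Symmetry is assumed
   separately in the theorem. *)
Variable red : T -> T -> bool.

Definition disjoint_nonempty (B : 'I_5 -> {set T}) : Prop :=
  (forall i, B i != set0) /\
  (forall i j, i != j -> [disjoint B i & B j]).

Definition pentagon_blowup (B : 'I_5 -> {set T}) : Prop :=
  disjoint_nonempty B /\
  forall i : 'I_5,
    (forall x y, x \in B i -> y \in B (ish i 1) -> red x y) /\
    (forall x y, x \in B i -> y \in B (ish i 2) -> ~~ red x y).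

(* Every
   unordered pair of distinct parts {B_i, B_j} is of the form {B_i, B_(i+1)}
   or {B_i, B_(i+2)} for exactly one ordered choice, so each edge is counted
   exactly once. *)
Definition nb_wrong (B : 'I_5 -> {set T}) : nat :=
  \sum_(i < 5)
    (#|[set p in setX (B i) (B (ish i 1)) | ~~ red p.1 p.2]|
     + #|[set p in setX (B i) (B (ish i 2)) | red p.1 p.2]|).

Definition exactly_flips_away (B : 'I_5 -> {set T}) (t : nat) : Prop :=
  disjoint_nonempty B /\ nb_wrong B = t.

Definition bad_config (A : 'I_5 -> {set T}) (u : T) (S : {set T}) : Prop :=
  exists (i : 'I_5) (a b c : T), S = [set a; b; c] /\
   ((a \in A i /\ b \in A (ish i 2) /\ c \in A (ish i 3) /\
     red u a /\ red u b /\ red u c)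
 \/ (a \in A i /\ b \in A (ish i 1) /\ c \in A (ish i 2) /\
     ~~ red u a /\ ~~ red u b /\ ~~ red u c)).

Definition has_disjoint_bad (A : 'I_5 -> {set T}) (u : T) (k : nat) : Prop :=
  exists P : {set {set T}},
    #|P| = k /\ trivIset P /\ (forall S, S \in P -> bad_config A u S).

End Pentagon.

From mathcomp Require Import all_boot zify.
Set Implicit Arguments. Unset Strict Implicit. Unset Printing Implicit Defensive.

(* Let r_k and b_k count the red and blue neighbours of u in A_k.  When u joins
   A_k, the edges at u of the wrong colour go to the red neighbours in A_(k+2),
   A_(k+3) and the blue neighbours in A_(k+1), A_(k+4); their number F_k is the
   number of flips separating that family from a pentagon blow-up.  Every bad
   configuration contains such a wrong neighbour for every k, so t <= F_k for all
   k.  Conversely, if all |A_k| and all F_k are at least s, there are s disjoint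
   bad configurations: a bad configuration centred at k contains two wrong
   neighbours for k and at most one for any other part, so removing one whose
   centre has F_k > s preserves the hypotheses for s - 1.  Such a configuration
   exists: with no bad configuration at all some F_k vanishes; if a centre k has
   F_k <= s, positivity spreads to all five parts, so every part is a centre, and
   sum_k F_k = 2 sum_k |A_k| >= 10 s gives some F_k > s.  Hence some F_k = t. *)

Lemma periodic5_window (P : nat -> bool) n :
  (forall k, P (5 + k) = P k) ->
  P n -> P n.+1 -> P n.+2 -> P n.+3 -> P n.+4 -> forall k, P k.
Proof.
move=> P5 Pn0 Pn1 Pn2 Pn3 Pn4.
have window k : [&& P (n + k), P (n + k).+1, P (n + k).+2, P (n + k).+3 & P (n + k).+4].
  elim: k => [|k /and5P [P0 P1 P2 P3 P4]]; first by rewrite addn0 Pn0 Pn1 Pn2 Pn3 Pn4.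
  by rewrite addnS P1 P2 P3 P4 -[(n + k).+4.+1]/(5 + (n + k)) P5 P0.
have P5m m k : P (5 * m + k) = P k by elim: m => // m IHm; rewrite mulnS -addnA P5.
by move=> k; rewrite -(P5m n) mulSn -addnA; case/and5P: (window (4 * n + k)).
Qed.

Lemma forall_lt5 (P : nat -> bool) :
  (forall n, n < 5 -> P n) -> [&& P 0, P 1, P 2, P 3 & P 4].
Proof. by move=> H; rewrite !H. Qed.

(* [r n] and [b n] stand for the numbers of red and blue neighbours of u in part
   [n mod 5]; [red_triple n] and [blue_triple n] say that a bad configuration
   centred at [n] exists. *)
Section Flips.
Variables r b : nat -> nat.
Hypothesis r_periodic : forall n, r (5 + n) = r n.
Hypothesis b_periodic : forall n, b (5 + n) = b n.

Definition flips n := r n.+2 + r n.+3 + b n.+1 + b n.+4.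
Definition red_triple n := [&& 0 < r n, 0 < r n.+2 & 0 < r n.+3].
Definition blue_triple n := [&& 0 < b n.+4, 0 < b n & 0 < b n.+1].

Lemma flips0_of_no_triple :
  (forall n, 0 < r n + b n) -> (forall n, n < 5 -> ~~ (red_triple n || blue_triple n)) ->
  exists2 n, n < 5 & flips n = 0.
Proof.
move=> cover no_triple.
have [|f0] := posnP (flips 0); first by exists 0.
have [|f1] := posnP (flips 1); first by exists 1.
have [|f2] := posnP (flips 2); first by exists 2.
have [|f3] := posnP (flips 3); first by exists 3.
have [|f4] := posnP (flips 4); first by exists 4.
move: f0 f1 f2 f3 f4 (forall_lt5 (fun n _ => cover n)) (forall_lt5 no_triple).
(* a finite check over the 2^10 sign patterns of the r n and b n *)
rewrite /red_triple /blue_triple /flips !addn_gt0 !r_periodic !b_periodic.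
move: (0 < r 0) (0 < r 1) (0 < r 2) (0 < r 3) (0 < r 4).
move: (0 < b 0) (0 < b 1) (0 < b 2) (0 < b 3) (0 < b 4).
by do 10!case.
Qed.

Lemma sum_flips : \sum_(n < 5) flips n = 2 * \sum_(n < 5) (r n + b n).
Proof.
rewrite !big_ord_recr !big_ord0 /flips /= !r_periodic !b_periodic; lia.
Qed.

Variable s : nat.
Hypothesis s_gt0 : 0 < s.
Hypothesis part_ge : forall n, s <= r n + b n.
Hypothesis flips_ge : forall n, s <= flips n.

Lemma exists_flips_gt : exists2 n, n < 5 & s < flips n.
Proof.
have [i _ imax] := @arg_maxnP 'I_5 ord0 xpredT flips isT.
exists i => //.
have le_max : \sum_(n < 5) flips n <= \sum_(n < 5) flips i.
  by apply: leq_sum => n _; apply: imax.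
have le_sum : 2 * \sum_(n < 5) s <= 2 * \sum_(n < 5) (r n + b n).
  by rewrite leq_mul2l leq_sum ?orbT.
by move: le_max le_sum; rewrite sum_flips !sum_nat_const card_ord; lia.
Qed.

Lemma red_triple_spread n : red_triple n -> flips n <= s -> forall k, 0 < r k.
Proof.
case/and3P=> r0 r2 r3 tight; apply: (periodic5_window (n := n)) => // [k||].
- by rewrite r_periodic.
- by have := part_ge n.+1; rewrite /flips in tight; lia.
- by have := part_ge n.+4; rewrite /flips in tight; lia.
Qed.

Lemma blue_triple_spread n : blue_triple n -> flips n <= s -> forall k, 0 < b k.
Proof.
case/and3P=> b4 b0 b1 tight; apply: (periodic5_window (n := n)) => // [k||].
- by rewrite b_periodic.
- by have := part_ge n.+2; rewrite /flips in tight; lia.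
- by have := part_ge n.+3; rewrite /flips in tight; lia.
Qed.

Lemma exists_removable_triple :
  exists2 n, n < 5 & s < flips n /\ (red_triple n || blue_triple n).
Proof.
have [/existsP [[n n5] /= triple_n] | no_triple] :=
  boolP [exists n : 'I_5, red_triple n || blue_triple n].
- have [loose | tight] := ltnP s (flips n); first by exists n.
  have [m m5 loose] := exists_flips_gt; exists m => //; split=> //.
  case/orP: triple_n => [/red_triple_spread | /blue_triple_spread] /(_ tight) pos.
    by rewrite /red_triple !pos.
  by rewrite /blue_triple !pos orbT.
- have [n n5 flat] : exists2 n, n < 5 & flips n = 0.
    apply: flips0_of_no_triple => [k | k k5]; first by have := part_ge k; lia.
    by move: no_triple; rewrite negb_exists => /forallP /(_ (Ordinal k5)).
  by have := flips_ge n; rewrite flat; lia.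
Qed.
End Flips.

Lemma cardsU_disjoint (T : finType) (X Y : {set T}) :
  [disjoint X & Y] -> #|X :|: Y| = #|X| + #|Y|.
Proof. by move=> dXY; apply/eqP; rewrite (leq_card_setU X Y).2. Qed.

Lemma leq_card_setI3 (T : finType) (X : {set T}) a b c :
  #|X :&: [set a; b; c]| <= (a \in X) + (b \in X) + (c \in X).
Proof.
pose s := [seq x <- [:: a; b; c] | x \in X].
have sub : X :&: [set a; b; c] \subset s.
  by apply/subsetP => x; rewrite !inE mem_filter !inE -orbA andbC.
rewrite (leq_trans (subset_leq_card sub)) // (leq_trans (card_size s)) //.
by rewrite size_filter /= addn0 addnA.
Qed.

Section PairCounts.
Variables (T : finType) (P : T -> T -> bool) (X Y : {set T}).
Hypothesis noP : forall x y, x \in X -> y \in Y -> ~~ P x y.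

Lemma card_pairs0 : #|[set p in setX X Y | P p.1 p.2]| = 0.
Proof.
apply: eq_card0 => -[x y]; rewrite !inE /=.
by apply/negP => /andP [/andP [xX yY]]; apply/negP/noP.
Qed.

Lemma card_pairs_setU1l v :
  #|[set p in setX (v |: X) Y | P p.1 p.2]| = #|[set y in Y | P v y]|.
Proof.
have inj : injective (@pair T T v) by move=> y1 y2 [].
rewrite -(card_imset _ inj); apply: eq_card => -[x y]; rewrite !inE /=.
apply/idP/imsetP => [|[y' + [-> ->]]].
  case/andP => /andP [/orP [/eqP -> | xX] yY] Pxy.
    by exists y; rewrite ?inE ?yY.
  by move: (noP xX yY); rewrite Pxy.
by rewrite !inE eqxx => /andP [-> ->].
Qed.

Lemma card_pairs_setU1r v :
  #|[set p in setX X (v |: Y) | P p.1 p.2]| = #|[set x in X | P x v]|.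
Proof.
have inj : injective (fun x : T => (x, v)) by move=> x1 x2 [].
rewrite -(card_imset _ inj); apply: eq_card => -[x y]; rewrite !inE /=.
apply/idP/imsetP => [|[x' + [-> ->]]].
  case/andP => /andP [xX /orP [/eqP -> | yY]] Pxy.
    by exists x; rewrite ?inE ?xX.
  by move: (noP xX yY); rewrite Pxy.
by rewrite !inE eqxx => /andP [-> ->].
Qed.

End PairCounts.

Section Neighbourhood.
Variables (T : finType) (red : T -> T -> bool) (u : T).
Implicit Types (A : 'I_5 -> {set T}) (X : {set T}).

(* Parts are also indexed by integers read modulo 5, so that the cyclic index
   arithmetic becomes arithmetic on nat. *)
Definition part A n := A (inord (n %% 5)).
Definition parts_disjoint A := forall i j : 'I_5, i != j -> [disjoint A i & A j].

Lemma part_eqmod A m n : m %% 5 = n %% 5 -> part A m = part A n.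
Proof. by rewrite /part => ->. Qed.

Lemma part_ish A (i : 'I_5) k : A (ish i k) = part A (i + k).
Proof. by rewrite /part; congr A; apply: val_inj; rewrite /= inordK ?ltn_pmod. Qed.

Lemma part_ish_inord A n k : A (ish (inord (n %% 5)) k) = part A (n + k).
Proof. by rewrite part_ish; apply: part_eqmod; rewrite inordK ?ltn_pmod // modnDml. Qed.

Lemma part_ord A (i : 'I_5) : A i = part A i.
Proof. by rewrite /part; congr A; apply: val_inj; rewrite /= modn_small // inordK. Qed.

Lemma disjoint_part A m n :
  parts_disjoint A -> m %% 5 != n %% 5 -> [disjoint part A m & part A n].
Proof.
move=> disjA mn; apply: disjA; apply: contra mn => /eqP/(congr1 val) /=.
by rewrite !inordK ?ltn_pmod // => ->.
Qed.

Lemma mem_part A m n x :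
  parts_disjoint A -> x \in part A m -> (x \in part A n) = (m %% 5 == n %% 5).
Proof.
move=> disjA xm; have [mn | mn] := eqVneq (m %% 5) (n %% 5).
  by rewrite -(part_eqmod A mn).
exact: disjointFr (disjoint_part disjA mn) xm.
Qed.

Definition red_nbrs X := [set x in X | red u x].
Definition blue_nbrs X := [set x in X | ~~ red u x].
Definition nred A n := #|red_nbrs (part A n)|.
Definition nblue A n := #|blue_nbrs (part A n)|.

(* The neighbours of [u] whose edge to [u] gets the wrong colour when [u] joins part [n]. *)
Definition wrong_nbrs A n :=
  (red_nbrs (part A n.+2) :|: red_nbrs (part A n.+3))
  :|: (blue_nbrs (part A n.+1) :|: blue_nbrs (part A n.+4)).

Lemma card_part A n : #|part A n| = nred A n + nblue A n.
Proof.
rewrite -(cardsID [set x | red u x]); congr (_ + _); apply: eq_card => x.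
  by rewrite !inE.
by rewrite !inE andbC.
Qed.

Lemma card_wrong_nbrs A n :
  parts_disjoint A -> #|wrong_nbrs A n| = flips (nred A) (nblue A) n.
Proof.
move=> disjA; have dnbrs m k (p q : T -> bool) : m %% 5 != k %% 5 ->
    [disjoint [set x in part A m | p x] & [set x in part A k | q x]].
  move=> mk; apply: disjointW (disjoint_part disjA mk);
  by apply/subsetP => x; rewrite inE => /andP [].
rewrite /wrong_nbrs /flips !cardsU_disjoint ?dnbrs ?addnA //; try lia.
rewrite -setI_eq0; apply/eqP/setP => x; rewrite !inE.
by case: (red u x); rewrite ?andbF ?andbT.
Qed.

Lemma nred_periodic A n : nred A (5 + n) = nred A n.
Proof. by rewrite /nred (part_eqmod A (modnDl n 5)). Qed.

Lemma nblue_periodic A n : nblue A (5 + n) = nblue A n.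
Proof. by rewrite /nblue (part_eqmod A (modnDl n 5)). Qed.

Lemma wrong_nbrs_eqmod A m n : m %% 5 = n %% 5 -> wrong_nbrs A m = wrong_nbrs A n.
Proof.
by move=> mn; congr ((red_nbrs _ :|: red_nbrs _) :|: (blue_nbrs _ :|: blue_nbrs _));
  apply: part_eqmod; lia.
Qed.

Lemma mem_wrong_nbrs A m n x : parts_disjoint A -> x \in part A m ->
  (x \in wrong_nbrs A n) =
    if red u x then (m == n.+2 %[mod 5]) || (m == n.+3 %[mod 5])
    else (m == n.+1 %[mod 5]) || (m == n.+4 %[mod 5]).
Proof.
move=> disjA xm; rewrite !inE !(mem_part _ disjA xm).
by case: (red u x); rewrite ?andbT ?andbF ?orbF.
Qed.

Lemma bad_config_meets_wrong_nbrs A S n : parts_disjoint A ->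
  bad_config red A u S -> exists2 x, x \in S & x \in wrong_nbrs A n.
Proof.
move=> disjA [i [a [b [c [-> abc]]]]].
suff : [|| a \in wrong_nbrs A n, b \in wrong_nbrs A n | c \in wrong_nbrs A n].
  by case/or3P; [exists a | exists b | exists c]; rewrite // !inE eqxx ?orbT.
case: abc => [] [ai [bi [ci [ua [ub uc]]]]]; rewrite part_ord !part_ish in ai bi ci;
  rewrite (mem_wrong_nbrs _ disjA ai) (mem_wrong_nbrs _ disjA bi) (mem_wrong_nbrs _ disjA ci);
  rewrite ?ua ?ub ?uc ?(negbTE ua) ?(negbTE ub) ?(negbTE uc); lia.
Qed.

Lemma has_disjoint_bad_le_wrong A t n : parts_disjoint A ->
  has_disjoint_bad red A u t -> t <= #|wrong_nbrs A n|.
Proof.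
move=> disjA [P [<- [trivP badP]]].
pose pick_wrong S := odflt u [pick x in S :&: wrong_nbrs A n].
have pick_wrongP S : S \in P -> pick_wrong S \in S :&: wrong_nbrs A n.
  move=> SP; rewrite /pick_wrong; case: pickP => [x //| none].
  have [x xS xW] := bad_config_meets_wrong_nbrs n disjA (badP S SP).
  by move: (none x); rewrite inE xS xW.
have inj : {in P &, injective pick_wrong}.
  move=> S1 S2 S1P S2P same; apply: contraTeq isT => neq.
  have := pick_wrongP S1 S1P; have := pick_wrongP S2 S2P.
  rewrite same !inE => /andP [x2 _] /andP [x1 _].
  by rewrite (disjointFr (trivIsetP trivP S1 S2 S1P S2P neq) x1) in x2.
rewrite -(card_in_imset inj); apply/subset_leq_card/subsetP => x /imsetP [S SP ->].
by have := pick_wrongP S SP; rewrite inE => /andP [].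
Qed.

Lemma part_setD A S n : part (fun k => A k :\: S) n = part A n :\: S.
Proof. by []. Qed.

Lemma wrong_nbrs_setD A S n :
  wrong_nbrs (fun k => A k :\: S) n = wrong_nbrs A n :\: S.
Proof. by apply/setP => x; rewrite !inE; case: (x \in S); rewrite ?andbF. Qed.

Lemma bad_config_sub A A' S : (forall k, A' k \subset A k) ->
  bad_config red A' u S -> bad_config red A u S.
Proof.
move=> sub [i [a [b [c [-> abc]]]]]; exists i, a, b, c; split=> //.
by case: abc => [] [/(subsetP (sub _)) ai [/(subsetP (sub _)) bi [/(subsetP (sub _)) ci]]];
  [left | right].
Qed.

Lemma bad_config_cover A S x : bad_config red A u S -> x \in S -> exists k, x \in A k.
Proof.
case=> i [a [b [c [-> abc]]]]; rewrite !inE -orbA => /or3P [] /eqP ->;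
  by case: abc => [] [ai [bi [ci _]]]; eexists; eassumption.
Qed.

Lemma bad_config_neq0 A S : bad_config red A u S -> S != set0.
Proof. by case=> i [a [b [c [-> _]]]]; apply/set0Pn; exists a; rewrite !inE eqxx. Qed.

Lemma has_disjoint_bad_setD A S s : bad_config red A u S ->
  has_disjoint_bad red (fun k => A k :\: S) u s -> has_disjoint_bad red A u s.+1.
Proof.
move=> badS [P [cardP [trivP badP]]].
have disjS : {in P, forall S' : {set T}, [disjoint S & S']}.
  move=> S' /badP badS'; rewrite disjoints_subset; apply/subsetP => x xS.
  by rewrite inE; apply/negP => /(bad_config_cover badS') [k]; rewrite inE xS.
have set0P : set0 \notin P by apply/negP => /badP /bad_config_neq0; rewrite eqxx.
have [trivSP S_notin_P] := trivIsetU1 disjS trivP set0P.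
exists (S |: P); split; first by rewrite cardsU1 S_notin_P cardP.
split=> // S'; rewrite !inE => /orP [/eqP -> // | /badP].
by apply: bad_config_sub => k; apply: subsetDl.
Qed.

Definition removable A n S :=
  [/\ bad_config red A u S, forall m, #|part A m :&: S| <= 1
    & forall m, #|wrong_nbrs A m :&: S| <= (m == n %[mod 5]).+1].

Lemma red_triple_removable A n : parts_disjoint A ->
  red_triple (nred A) n -> exists S, removable A n S.
Proof.
move=> disjA /and3P [/card_gt0P [a]] + /card_gt0P [b] + /card_gt0P [c].
rewrite !inE => /andP [an ua] /andP [bn ub] /andP [cn uc].
exists [set a; b; c]; split=> [|m|m].
- exists (inord (n %% 5)), a, b, c; split=> //; left.
  by rewrite !part_ish_inord addn2 addn3.
- apply: leq_trans (leq_card_setI3 _ _ _ _) _.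
  by rewrite (mem_part _ disjA an) (mem_part _ disjA bn) (mem_part _ disjA cn); lia.
- apply: leq_trans (leq_card_setI3 _ _ _ _) _.
  rewrite (mem_wrong_nbrs _ disjA an) (mem_wrong_nbrs _ disjA bn) (mem_wrong_nbrs _ disjA cn).
  by rewrite ua ub uc; lia.
Qed.

Lemma blue_triple_removable A n : parts_disjoint A ->
  blue_triple (nblue A) n -> exists S, removable A n S.
Proof.
move=> disjA /and3P [/card_gt0P [a]] + /card_gt0P [b] + /card_gt0P [c].
rewrite !inE => /andP [an ua] /andP [bn ub] /andP [cn uc].
exists [set a; b; c]; split=> [|m|m].
- have part1 : part A (n.+4 + 1) = part A n by apply: part_eqmod; lia.
  have part2 : part A (n.+4 + 2) = part A n.+1 by apply: part_eqmod; lia.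
  exists (inord (n.+4 %% 5)), a, b, c; split=> //; right.
  by rewrite !part_ish_inord part1 part2.
- apply: leq_trans (leq_card_setI3 _ _ _ _) _.
  by rewrite (mem_part _ disjA an) (mem_part _ disjA bn) (mem_part _ disjA cn); lia.
- apply: leq_trans (leq_card_setI3 _ _ _ _) _.
  rewrite (mem_wrong_nbrs _ disjA an) (mem_wrong_nbrs _ disjA bn) (mem_wrong_nbrs _ disjA cn).
  by rewrite (negbTE ua) (negbTE ub) (negbTE uc); lia.
Qed.

Lemma has_disjoint_bad_of_large s A : parts_disjoint A ->
  (forall n, s <= #|part A n|) -> (forall n, s <= #|wrong_nbrs A n|) ->
  has_disjoint_bad red A u s.
Proof.
elim: s A => [|s IHs] A disjA large_part large_wrong.
  exists set0; split; first exact: cards0.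
  by split=> [|S]; [apply/trivIsetP => S1 S2 | ]; rewrite inE.
have [n _ [loose triple]] : exists2 n, n < 5 &
    s.+1 < flips (nred A) (nblue A) n /\ (red_triple (nred A) n || blue_triple (nblue A) n).
  apply: (exists_removable_triple (nred_periodic A) (nblue_periodic A)) => // k.
  - by rewrite -card_part.
  - by rewrite -card_wrong_nbrs.
have [S [badS partS wrongS]] : exists S, removable A n S.
  by case/orP: triple; [apply: red_triple_removable | apply: blue_triple_removable].
apply: (has_disjoint_bad_setD badS); apply: IHs => [i j ij|m|m].
- exact: disjointW (subsetDl _ _) (subsetDl _ _) (disjA i j ij).
- rewrite part_setD; have := cardsID S (part A m).
  by have := large_part m; have := partS m; lia.
- rewrite wrong_nbrs_setD; have := cardsID S (wrong_nbrs A m); have := wrongS m.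
  case: eqP => [mn | _]; last by have := large_wrong m; lia.
  by rewrite -card_wrong_nbrs // -(wrong_nbrs_eqmod A mn) in loose; lia.
Qed.

Lemma blowup_red A m n x y : pentagon_blowup red A ->
  x \in part A m -> y \in part A n -> n = m.+1 %[mod 5] -> red x y.
Proof.
case=> _ blow xm yn mn; have [red_next _] := blow (inord (m %% 5)).
by apply: red_next => //; rewrite part_ish_inord addn1 -(part_eqmod A mn).
Qed.

Lemma blowup_blue A m n x y : pentagon_blowup red A ->
  x \in part A m -> y \in part A n -> n = m.+2 %[mod 5] -> ~~ red x y.
Proof.
case=> _ blow xm yn mn; have [_ blue_next] := blow (inord (m %% 5)).
by apply: blue_next => //; rewrite part_ish_inord addn2 -(part_eqmod A mn).
Qed.

Definition join_part A (i k : 'I_5) := if k == ord0 then u |: A i else A (ish i k).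

Lemma nb_wrong_join A (i : 'I_5) : (forall x y, red x y = red y x) ->
  pentagon_blowup red A -> nb_wrong red (join_part A i) = #|wrong_nbrs A i|.
Proof.
move=> red_sym blowA.
have disjA : parts_disjoint A := blowA.1.2.
rewrite /nb_wrong !big_ord_recl big_ord0 /join_part /= /bump /= !part_ish part_ord.
pose blue x y := ~~ red x y.
(* only the four counts of edges at u survive, the blow-up kills the other six *)
rewrite (@card_pairs_setU1l _ blue (part A i)) ?(@card_pairs_setU1l _ red (part A i))
  ?(@card_pairs_setU1r _ red _ (part A i)) ?(@card_pairs_setU1r _ blue _ (part A i))
  ?(@card_pairs0 _ red) ?(@card_pairs0 _ blue);
  try by move=> x y xm yn; rewrite /blue ?negbK;
    [apply: (blowup_red blowA xm yn) || apply: (blowup_blue blowA xm yn)]; lia.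
have red_sym_card X : #|[set x in X | red x u]| = #|red_nbrs X|.
  by apply: eq_card => x; rewrite !inE red_sym.
have blue_sym_card X : #|[set x in X | blue x u]| = #|blue_nbrs X|.
  by apply: eq_card => x; rewrite !inE /blue red_sym.
rewrite red_sym_card blue_sym_card -[[set y in _ | blue u y]]/(blue_nbrs _).
rewrite -[[set y in _ | red u y]]/(red_nbrs _) card_wrong_nbrs // /flips /nred /nblue.
rewrite !add0n !addn0 !modn_small // -[1 + 2]/3 -[1 + 1 + 2]/4 addn1 addn2 addn3 addn4.
lia.
Qed.

Lemma mem_join_part A (i k : 'I_5) x :
  (x \in join_part A i k) = ((x == u) && (k == ord0)) || (x \in A (ish i k)).
Proof.
rewrite /join_part; case: eqP => [-> | _]; last by rewrite andbF.
by rewrite !inE andbT part_ord part_ish addn0.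
Qed.

Lemma join_part_disjoint_nonempty A i : (forall k, u \notin A k) ->
  disjoint_nonempty A -> disjoint_nonempty (join_part A i).
Proof.
move=> u_notin [nonempty disjA]; split=> [k | k l kl].
  rewrite /join_part; case: ifP => _; last exact: nonempty.
  by apply/set0Pn; exists u; rewrite !inE eqxx.
have ish_neq : ish i k != ish i l.
  apply: contra kl => /eqP/(congr1 val) /= ikl; rewrite -val_eqE /=.
  by move: ikl (ltn_ord k) (ltn_ord l); lia.
apply/pred0P => x /=; rewrite !mem_join_part; case: eqP => [-> | _] /=.
  rewrite !(negbTE (u_notin _)) !orbF; apply/negP => /andP [/eqP k0 /eqP l0].
  by rewrite k0 l0 eqxx in kl.
by apply/negP => /andP [xk xl]; rewrite (disjointFr (disjA _ _ ish_neq) xk) in xl.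
Qed.

Lemma exists_card_wrong_nbrs_eq A t : parts_disjoint A ->
  has_disjoint_bad red A u t -> ~ has_disjoint_bad red A u t.+1 ->
  (forall i, t < #|A i|) -> exists i : 'I_5, #|wrong_nbrs A i| = t.
Proof.
move=> disjA has_t no_t1 large.
have le_wrong n : t <= #|wrong_nbrs A n| := has_disjoint_bad_le_wrong n disjA has_t.
suff /existsP [i /eqP] : [exists i : 'I_5, #|wrong_nbrs A i| == t] by exists i.
apply: contraT; rewrite negb_exists => /forallP wrong_ne; case: no_t1.
apply: has_disjoint_bad_of_large disjA _ _ => n; first exact: large.
rewrite -(wrong_nbrs_eqmod A (modn_mod n 5)).
have := wrong_ne (Ordinal (ltn_pmod n (isT : 0 < 5))).
by have := le_wrong (n %% 5); rewrite /=; lia.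
Qed.

End Neighbourhood.

Theorem proposition7p11 (T : finType) (red : T -> T -> bool)
  (red_sym : forall x y, red x y = red y x)
  (u : T) (A : 'I_5 -> {set T}) (t : nat) :
  (forall i, u \notin A i) ->
  pentagon_blowup red A ->
  has_disjoint_bad red A u t ->
  ~ has_disjoint_bad red A u t.+1 ->
  (forall i, t < #|A i|) ->
  exists i : 'I_5,
    exactly_flips_away red
      (fun k : 'I_5 => if k == ord0 then u |: A i else A (ish i k)) t.
Proof.
move=> u_notin blowA has_t no_t1 large.
have [i wrong_i] := exists_card_wrong_nbrs_eq blowA.1.2 has_t no_t1 large.
exists i; split; first exact: join_part_disjoint_nonempty blowA.1.
by rewrite nb_wrong_join.
Qed.
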